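(* Let $d\ge 2$, $\mathcal{D}\subset\mathbb{R}^d$ open and bounded, $\mathcal{K}=\{0,\dots,\kappa-1\}$, $\boldsymbol{\phi}\in\mathcal{C}^\infty(\mathbb{R}^d,\mathbb{R}^\kappa)$. For all $k\in\mathcal{K}$, $$\mathcal{D}\cap\bigcup_{\mathcal{I}\in\mathbb{I}_k^2}\mathcal{E}_{\mathcal{I}}(\boldsymbol{\phi})=\mathcal{D}\cap\bigcup_{\mathcal{I}\in\mathbb{I}_k^r,\,r\ge 2}\mathcal{E}_{\mathcal{I}}(\boldsymbol{\phi})\subset\mathcal{D}\cap\partial\Omega_k(\boldsymbol{\phi}).$$ If in addition $|D\widehat{\boldsymbol{\phi}}_{\mathcal{I}}|>0$ on $\mathcal{M}_{\mathcal{I}}(\boldsymbol{\phi})$ for all $\mathcal{I}\in\mathbb{I}_k^2$, then $$\mathcal{D}\cap\bigcup_{\mathcal{I}\in\mathbb{I}_k^2}\mathcal{E}_{\mathcal{I}}(\boldsymbol{\phi})=\mathcal{D}\cap\bigcup_{\mathcal{I}\in\mathbb{I}_k^r,\,r\ge 2}\mathcal{E}_{\mathcal{I}}(\boldsymbol{\phi})=\mathcal{D}\cap\partial\Omega_k(\boldsymbol{\phi}).$$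
   Context: $\boldsymbol{\phi}=(\phi_0,\dots,\phi_{\kappa-1})$. For $j\in\mathcal{K}$, $\Omega_j(\boldsymbol{\phi})=\operatorname{int}\{x\in\mathcal{D}\mid\phi_j(x)\le\phi_m(x)\ \forall m\ne j\}$. $\mathbb{I}_k^r=\{\mathcal{I}\subset\mathcal{K}\mid|\mathcal{I}|=r,\ k\in\mathcal{I}\}$. For $\mathcal{I}=\{k_1<\dots<k_{|\mathcal{I}|}\}$, $\widehat{\boldsymbol{\phi}}_{\mathcal{I}}=(\phi_{k_1}-\phi_{k_2},\dots,\phi_{k_1}-\phi_{k_{|\mathcal{I}|}})$, $\mathcal{M}_{\mathcal{I}}(\boldsymbol{\phi})=\{x\in\overline{\mathcal{D}}\mid\widehat{\boldsymbol{\phi}}_{\mathcal{I}}(x)=0\}$, and $\mathcal{E}_{\mathcal{I}}(\boldsymbol{\phi})=\bigcap_{j\in\mathcal{I}}\partial\Omega_j(\boldsymbol{\phi})$ (boundaries in $\mathbb{R}^d$). *)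

From HB Require Import structures.
From mathcomp Require Import all_boot all_order all_algebra.
From mathcomp Require Import all_classical all_reals all_analysis.
Set Implicit Arguments. Unset Strict Implicit. Unset Printing Implicit Defensive.
Import Order.TTheory GRing.Theory Num.Theory.
Import numFieldNormedType.Exports.
Local Open Scope classical_set_scope.
Local Open Scope ring_scope.

Fixpoint Cn (R : realType) (d : nat) (n : nat) (f : 'rV[R]_d -> R) : Prop :=
  match n with
  | 0%N => continuous f
  | n'.+1 => (forall x, differentiable f x) /\
             (forall v : 'rV[R]_d, Cn n' (fun x => 'D_v f x))
  end.

Definition smooth (R : realType) (d : nat) (f : 'rV[R]_d -> R) : Prop :=
  forall n, Cn n f.

Definition boundary (R : realType) (d : nat) (A : set 'rV[R]_d) : set 'rV[R]_d :=
  closure A `\` A°.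

(* phi = (phi_0, ..., phi_{kappa-1}) given componentwise *)
Definition Omega (R : realType) (d kappa : nat) (D : set 'rV[R]_d)
  (phi : 'I_kappa -> 'rV[R]_d -> R) (j : 'I_kappa) : set 'rV[R]_d :=
  [set x | D x /\ forall m : 'I_kappa, m != j -> phi j x <= phi m x]°.

Definition IIkr (kappa : nat) (k : 'I_kappa) (r : nat) (I : {set 'I_kappa}) : Prop :=
  #|I| = r /\ k \in I.

Definition EI (R : realType) (d kappa : nat) (D : set 'rV[R]_d)
  (phi : 'I_kappa -> 'rV[R]_d -> R) (I : {set 'I_kappa}) : set 'rV[R]_d :=
  [set x | forall j : 'I_kappa, j \in I -> boundary (Omega D phi j) x].

(* hat phi_I = (phi_{k1} - phi_{k2}, ..., phi_{k1} - phi_{k_|I|}) where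
   enum I = [k1 < k2 < ... ] (enumeration of a set of ordinals is increasing);
   k0 is an irrelevant default index. *)
Definition phihat (R : realType) (d kappa : nat)
  (phi : 'I_kappa -> 'rV[R]_d -> R) (k0 : 'I_kappa) (I : {set 'I_kappa})
  : 'rV[R]_d -> 'rV[R]_(#|I|.-1) :=
  fun x => \row_(i < #|I|.-1)
     (phi (nth k0 (enum I) 0) x - phi (nth k0 (enum I) i.+1) x).

Definition MI (R : realType) (d kappa : nat) (D : set 'rV[R]_d)
  (phi : 'I_kappa -> 'rV[R]_d -> R) (k0 : 'I_kappa) (I : {set 'I_kappa})
  : set 'rV[R]_d :=
  [set x | closure D x /\ phihat phi k0 I x = 0].

From HB Require Import structures.
From mathcomp Require Import all_boot all_order all_algebra.
From mathcomp Require Import all_classical all_reals all_analysis.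
Import Order.TTheory GRing.Theory Num.Theory.
Import numFieldNormedType.Exports.
Set Implicit Arguments.
Unset Strict Implicit.
Unset Printing Implicit Defensive.

Local Open Scope classical_set_scope.
Local Open Scope ring_scope.

(* Any I in II_k^r with r >= 2 contains a pair {k, j}, and E_I shrinks as I
   grows, so pairs already give the whole union, which lies in the boundary of
   Omega_k because k is in I.  Conversely, let x in D be on the boundary of
   Omega_k.  If x were in the closure of no other cell Omega_j, some open
   W <= D around x would meet no such cell.  The closed sets
   A_j = {phi_j <= phi_m for all m} cover W, so if A_k missed a point of W, some
   A_j would have interior inside W \ A_k, and that interior is part of Omega_j
   with j <> k; hence W <= A_k and x in Omega_k, a contradiction.  So x is in
   the closure of some Omega_j, j <> k, but not in Omega_j itself: otherwise
   the open sets Omega_j and Omega_k would meet, phi_k - phi_j would vanish on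
   an open set and so would its differential, against nondegeneracy.  Thus x
   lies in E_{k,j}. *)

Lemma closed_cover_interior (T : topologicalType) (I : eqType) (s : seq I)
    (Q : I -> set T) (W : set T) :
  (forall i, closed (Q i)) -> open W -> W !=set0 ->
  (forall y, W y -> exists2 i, i \in s & Q i y) ->
  exists2 i, i \in s & (W `&` (Q i)°) !=set0.
Proof.
move=> Qcl; elim: s W => [|a s IH] W oW [y Wy] cover; first by have [] := cover y Wy.
have [WQ|] := pselect (W `<=` Q a).
  exists a; first exact: mem_head.
  by exists y; split=> //; move: WQ; rewrite open_subsetE //; apply.
move=> /existsNP[z /not_implyP[Wz nQz]].
have coverW' t : (W `&` ~` Q a) t -> exists2 i, i \in s & Q i t.
  move=> [Wt nQt]; have [i] := cover t Wt.
  by rewrite in_cons => /orP[/eqP->|]; [|exists i].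
have [i si [t [[Wt _] Qt]]] :=
  IH _ (openI oW (closed_openC (Qcl a))) (ex_intro _ z (conj Wz nQz)) coverW'.
by exists i; [rewrite in_cons si orbT | exists t].
Qed.

Lemma near_eq0_diff (R : realType) (V W : normedModType R) (f : V -> W) (y : V) :
  (\forall z \near y, f z = 0) -> 'd f y = 0 :> (V -> W).
Proof.
move=> f0; have fy0 : f y = 0 := nbhs_singleton f0.
apply: diff_unique; first exact: cst_continuous.
apply/eqaddoP => _/posnumP[e]; move/nbhs0P: f0 => f0.
near=> h; rewrite /= fy0 !addr0 subr0 /comp.
have -> : f (h + y) = 0 by rewrite addrC; near: h.
by rewrite normr0 mulr_ge0.
Unshelve. all: by end_near.
Qed.

Lemma IIkr_pair (kappa : nat) (k j : 'I_kappa) : j != k -> IIkr k 2 [set k; j]%SET.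
Proof. by move=> jk; split; [rewrite cards2 eq_sym jk | rewrite !inE eqxx]. Qed.

Lemma IIkr_pair_sub (kappa : nat) (k : 'I_kappa) r (I : {set 'I_kappa}) :
  IIkr k r I -> (2 <= r)%N -> exists2 j, j != k & {subset [set k; j]%SET <= I}.
Proof.
move=> [<- kI]; rewrite (cardsD1 k I) kI ltnS => /card_gt0P[j].
rewrite !inE => /andP[jk jI]; exists j => // i.
by rewrite !inE => /orP[/eqP->|/eqP->].
Qed.

Section ArgminCells.
Variables (R : realType) (d kappa : nat) (D : set 'rV[R]_d).
Variable phi : 'I_kappa -> 'rV[R]_d -> R.

Definition argmin_set (j : 'I_kappa) : set 'rV[R]_d :=
  [set x | forall m, m != j -> phi j x <= phi m x].

Lemma OmegaE j : Omega D phi j = (D `&` argmin_set j)°.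
Proof. by []. Qed.

Lemma argmin_set_cover (k : 'I_kappa) x : exists j, argmin_set j x.
Proof.
have [j _ jmin] := arg_minP (fun i => phi i x) (isT : xpredT k).
by exists j => m _; apply: jmin.
Qed.

Lemma EI_sub (I J : {set 'I_kappa}) :
  {subset I <= J} -> EI D phi J `<=` EI D phi I.
Proof. by move=> IJ x EJx i /IJ; exact: EJx. Qed.

Lemma phihat_eq0 k0 (I : {set 'I_kappa}) x :
  {in I &, forall a b, phi a x = phi b x} -> phihat phi k0 I x = 0.
Proof.
move=> phi_const; apply/rowP => i.
have lt_i : (i.+1 < #|I|)%N by rewrite -ltn_predRL.
have lt_0 : (0 < #|I|)%N by apply: leq_ltn_trans lt_i.
by rewrite !mxE (phi_const _ (nth k0 (enum I) i.+1)) ?subrr //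
  -mem_enum mem_nth // -cardE.
Qed.

Hypothesis phi_cont : forall j, continuous (phi j).

Lemma closed_argmin_set j : closed (argmin_set j).
Proof.
have -> : argmin_set j =
    \bigcap_(m in [set m | m != j]) ((fun x => phi j x - phi m x) @^-1` [set r | r <= 0]).
  by apply/seteqP; split=> x xj m /xj /=; rewrite subr_le0.
apply: closed_bigI => m _.
apply: (@preimage_closed _ R (fun x => phi j x - phi m x)); last exact: closed_le.
move=> x _; apply: continuousB; exact: phi_cont.
Qed.

Lemma boundary_OmegaE j :
  boundary (Omega D phi j) = closure (Omega D phi j) `\` Omega D phi j.
Proof. by rewrite /boundary (proj1 (interior_id _) (open_interior _)). Qed.

Hypothesis D_open : open D.

Lemma open_sub_argmin_set W k : open W -> W `<=` D ->
  (forall j, j != k -> W `&` Omega D phi j = set0) -> W `<=` argmin_set k.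
Proof.
move=> W_open WD W_Omega y Wy; apply: contrapT => not_kmin.
have cover z : (W `&` ~` argmin_set k) z ->
    exists2 i, i \in enum 'I_kappa & argmin_set i z.
  by have [i imin] := argmin_set_cover k z; exists i; rewrite ?mem_enum.
have W'_open : open (W `&` ~` argmin_set k).
  exact: openI W_open (closed_openC (closed_argmin_set (j := k))).
have [i _ [z [[Wz not_kminz] iminz]]] := closed_cover_interior closed_argmin_set
  W'_open (ex_intro _ y (conj Wy not_kmin)) cover.
have ik : i != k.
  by apply/eqP => ik; apply: not_kminz; rewrite -ik; exact: interior_subset.
have Omega_iz : Omega D phi i z.
  by rewrite OmegaE interiorI (proj1 (interior_id D) D_open); split => //; exact: WD.
by have : (W `&` Omega D phi i) z by []; rewrite W_Omega.
Qed.

Lemma Omega_of_not_closure k x : D x ->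
  (forall j, j != k -> ~ closure (Omega D phi j) x) -> Omega D phi k x.
Proof.
move=> Dx not_closure.
pose B := [set z | D z /\ forall j, j != k -> ~ Omega D phi j z].
have B_nbhs : nbhs x B.
  have D_nbhs : nbhs x D by move: D_open; rewrite openE; apply.
  have : \forall z \near x, forall j, j != k -> ~ Omega D phi j z.
    apply: (@filter_forall _ _ (fun j z => j != k -> ~ Omega D phi j z) (nbhs x) _).
    move=> j; have [->|jk] := eqVneq j k; first exact: nearW.
    have : (~` Omega D phi j)° x by rewrite interiorC; exact: not_closure.
    by apply: filterS => z nOz _.
  by move=> near_not_Omega; apply: filterS (filterI D_nbhs near_not_Omega) => z [].
have : B° `<=` D `&` argmin_set k.
  rewrite subsetI; split; first by move=> z /interior_subset[].
  apply: open_sub_argmin_set; first exact: open_interior.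
    by move=> z /interior_subset[].
  move=> j jk; apply/seteqP; split=> // z [/interior_subset[_ not_Omega] Oz].
  exact: not_Omega jk Oz.
by rewrite OmegaE open_subsetE; [apply | exact: open_interior].
Qed.

Lemma Omega_disjoint k0 j k : j != k ->
  (forall y, MI D phi k0 [set k; j]%SET y ->
     exists v, 'd (phihat phi k0 [set k; j]%SET) y v != 0) ->
  Omega D phi j `&` Omega D phi k = set0.
Proof.
move=> jk nondeg; apply/seteqP; split=> // y [Ojy Oky].
have phihat_near0 : \forall z \near y, phihat phi k0 [set k; j]%SET z = 0.
  near=> z; apply: phihat_eq0.
  have [_ kmin] : (D `&` argmin_set k) z by near: z.
  have [_ jmin] : (D `&` argmin_set j) z by near: z.
  have phi_kj : phi k z = phi j z by apply/le_anti; rewrite kmin ?jmin // eq_sym.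
  by move=> a b; rewrite !inE => /orP[/eqP->|/eqP->] /orP[/eqP->|/eqP->].
have Dy : D y by have [] := interior_subset Oky.
have [v] := nondeg y (conj (subset_closure Dy) (nbhs_singleton phihat_near0)).
by rewrite near_eq0_diff // eqxx.
Unshelve. all: by end_near.
Qed.

Lemma boundary_Omega_pair k0 k x : D x -> boundary (Omega D phi k) x ->
  (forall j, j != k -> forall y, MI D phi k0 [set k; j]%SET y ->
     exists v, 'd (phihat phi k0 [set k; j]%SET) y v != 0) ->
  exists2 j, j != k & EI D phi [set k; j]%SET x.
Proof.
move=> Dx; rewrite boundary_OmegaE => -[cl_k not_Ok] nondeg.
have [[j jk cl_j]|no_j] := pselect (exists2 j, j != k & closure (Omega D phi j) x).
  have not_Oj : ~ Omega D phi j x.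
    move=> /nbhs_interior /cl_k[y [Oky Ojy]].
    have : (Omega D phi j `&` Omega D phi k) y by [].
    by rewrite (Omega_disjoint jk (nondeg j jk)).
  by exists j => // i; rewrite !inE boundary_OmegaE => /orP[/eqP->|/eqP->].
by exfalso; apply/not_Ok/Omega_of_not_closure => // j jk cl_j; apply: no_j; exists j.
Qed.

End ArgminCells.

Theorem lemma2p6 (R : realType) (d kappa : nat) (D : set 'rV[R]_d)
  (phi : 'I_kappa -> 'rV[R]_d -> R) :
  (2 <= d)%N -> open D -> bounded_set D ->
  (forall j, smooth (phi j)) ->
  forall k : 'I_kappa,
    let U2 := [set x | exists I, IIkr k 2 I /\ EI D phi I x] in
    let Uall := [set x | exists r, (2 <= r)%N /\ exists I, IIkr k r I /\ EI D phi I x] in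
    (D `&` U2 = D `&` Uall /\ D `&` Uall `<=` D `&` boundary (Omega D phi k)) /\
    ((forall I, IIkr k 2 I -> forall x, MI D phi k I x ->
        exists v : 'rV[R]_d, 'd (phihat phi k I) x v != 0) ->
     D `&` U2 = D `&` Uall /\ D `&` Uall = D `&` boundary (Omega D phi k)).
Proof.
move=> _ D_open _ phi_smooth k U2 Uall.
have phi_cont j : continuous (phi j) := phi_smooth j 0%N.
have U2_Uall : U2 `<=` Uall by move=> x [I [kI EIx]]; exists 2%N; split=> //; exists I.
have Uall_U2 : Uall `<=` U2.
  move=> x [r [r2 [I [kI EIx]]]]; have [j jk jI] := IIkr_pair_sub kI r2.
  by exists [set k; j]%SET; split; [exact: IIkr_pair | exact: EI_sub EIx].
have U2E : D `&` U2 = D `&` Uall by rewrite eqEsubset; split; apply: setIS.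
have Uall_boundary : D `&` Uall `<=` D `&` boundary (Omega D phi k).
  by move=> x [Dx [r [_ [I [[_ kI] EIx]]]]]; split=> //; exact: EIx.
split=> // nondeg; split=> //; rewrite eqEsubset; split=> // x [Dx bx].
have [j jk EIx] := boundary_Omega_pair phi_cont D_open Dx bx
  (fun j jk => nondeg _ (IIkr_pair jk)).
split=> //; exists 2%N; split=> //.
by exists [set k; j]%SET; split=> //; exact: IIkr_pair.
Qed.
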